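(* Let $G$ be a nilpotent group such that $G/Z(G)$ contains a nontrivial divisible subgroup. Then $G$ contains a nontrivial divisible subgroup.
   Context: $Z(G)$ denotes the center of $G$. A group is divisible if every element has an $n$-th root in it for every integer $n\ge1$. *)

(* abstract (possibly infinite) groups, since MathComp's
   fingroup only covers finite groups (where divisible subgroups are trivial). *)
From Stdlib Require Import Arith.

Set Implicit Arguments.

Record group := Group {
  gcar :> Type;
  gmul : gcar -> gcar -> gcar;
  gone : gcar;
  ginv : gcar -> gcar;
  gmulA : forall x y z, gmul x (gmul y z) = gmul (gmul x y) z;
  gmul1 : forall x, gmul gone x = x;
  gmulV : forall x, gmul (ginv x) x = gone
}.

Arguments gmul {g} _ _.
Arguments gone {g}.
Arguments ginv {g} _.

Fixpoint gpow {G : group} (x : G) (n : nat) : G :=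
  match n with
  | O => gone
  | S m => gmul x (gpow x m)
  end.

Definition is_subgroup {G : group} (S : G -> Prop) : Prop :=
  S gone /\ (forall x y, S x -> S y -> S (gmul x y)) /\
  (forall x, S x -> S (ginv x)).

Definition nontrivial {G : group} (S : G -> Prop) : Prop :=
  exists x, S x /\ x <> gone.

Definition divisible {G : group} (S : G -> Prop) : Prop :=
  forall x, S x -> forall n, 1 <= n -> exists y, S y /\ gpow y n = x.

Definition has_nontrivial_divisible_subgroup (G : group) : Prop :=
  exists S : G -> Prop, is_subgroup S /\ divisible S /\ nontrivial S.

Definition center (G : group) : G -> Prop :=
  fun x => forall y, gmul x y = gmul y x.

Definition comm {G : group} (x y : G) : G :=
  gmul (ginv x) (gmul (ginv y) (gmul x y)).

Definition generated {G : group} (A : G -> Prop) : G -> Prop :=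
  fun x => forall S : G -> Prop, is_subgroup S -> (forall a, A a -> S a) -> S x.

Fixpoint lower_central {G : group} (i : nat) : G -> Prop :=
  match i with
  | O => fun _ => True
  | S j => generated (fun z => exists x y, lower_central j x /\ z = comm x y)
  end.

Definition nilpotent (G : group) : Prop :=
  exists c, forall x : G, lower_central c x -> x = gone.

Definition is_hom {G H : group} (f : G -> H) : Prop :=
  forall x y, f (gmul x y) = gmul (f x) (f y).

(* The quotient G/Z(G) is represented (up to isomorphism) by a group Q
   together with a surjective homomorphism G -> Q whose kernel is Z(G). *)
Definition is_quotient_by_center {G Q : group} (pi : G -> Q) : Prop :=
  is_hom pi /\ (forall q : Q, exists g, pi g = q) /\
  (forall g, pi g = gone <-> center G g).

From Stdlib Require Import Classical.

(* Let T be the preimage of the divisible subgroup D of G/Z(G); T is not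
   central.  As G is nilpotent there is a last index i for which T fails to
   centralize the i-th term of the lower central series; pick y in that term
   with [h0, y] <> 1 for some h0 in T.  Since T centralizes the next term,
   which contains every [h, y], the map h |-> [h, y] is a homomorphism on T.
   It kills Z(G), so it factors through D, and its image is a nontrivial
   divisible subgroup of G. *)

Section GroupFacts.
Variable G : group.
Implicit Types a b x y z : G.

Lemma mulgV x : gmul x (ginv x) = gone.
Proof.
  rewrite <- (gmul1 _ (gmul x (ginv x))), <- (gmulV _ (ginv x)) at 1.
  rewrite <- gmulA, (gmulA _ (ginv x) x (ginv x)), gmulV, gmul1.
  apply gmulV.
Qed.

Lemma mulg1 x : gmul x gone = x.
Proof. rewrite <- (gmulV _ x), gmulA, mulgV, gmul1; reflexivity. Qed.

Lemma mulgI a x y : gmul a x = gmul a y -> x = y.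
Proof.
  intro H. rewrite <- (gmul1 _ x), <- (gmul1 _ y), <- (gmulV _ a), <- !gmulA, H.
  reflexivity.
Qed.

Lemma invg_unique a b : gmul a b = gone -> a = ginv b.
Proof. intro H. rewrite <- (mulg1 a), <- (mulgV b), gmulA, H, gmul1. reflexivity. Qed.

Lemma mulg_idem_eq1 x : gmul x x = x -> x = gone.
Proof. intro H. apply (mulgI x). rewrite H, mulg1. reflexivity. Qed.

Lemma gpow_in (S : G -> Prop) x n : is_subgroup S -> S x -> S (gpow x n).
Proof. intros [S1 [SM _]] Sx. induction n; simpl; auto. Qed.

Lemma is_subgroup_full : is_subgroup (fun _ : G => True).
Proof. repeat split. Qed.

Lemma commgC x y : gmul (gmul y x) (comm x y) = gmul x y.
Proof.
  unfold comm. rewrite <- gmulA, (gmulA _ x (ginv x)), mulgV, gmul1.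
  rewrite gmulA, mulgV, gmul1. reflexivity.
Qed.

Lemma commg_unique x y z : gmul (gmul y x) z = gmul x y -> z = comm x y.
Proof. intro H. apply (mulgI (gmul y x)). rewrite H, commgC. reflexivity. Qed.

Lemma commg_eq1 x y : comm x y = gone -> gmul x y = gmul y x.
Proof. intro H. rewrite <- commgC, H, mulg1. reflexivity. Qed.

Lemma commg_swap x y : comm x y = ginv (comm y x).
Proof.
  apply invg_unique, (mulgI (gmul y x)).
  rewrite gmulA, commgC, commgC, mulg1. reflexivity.
Qed.

Lemma commMg a b y :
  gmul b (comm a y) = gmul (comm a y) b ->
  comm (gmul a b) y = gmul (comm a y) (comm b y).
Proof.
  intro Hc. symmetry. apply commg_unique.
  rewrite !gmulA, <- (gmulA _ (gmul y a) b), Hc, gmulA, commgC.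
  rewrite <- !gmulA, (gmulA _ y b), commgC. reflexivity.
Qed.

Lemma commMg_center a z y : center G z -> comm (gmul a z) y = comm a y.
Proof.
  intro Hz. symmetry. apply commg_unique.
  rewrite !gmulA, <- (gmulA _ (gmul y a) z), Hz, gmulA, commgC.
  rewrite <- !gmulA, (Hz y). reflexivity.
Qed.

Lemma lower_central_comm i a y :
  lower_central i y -> lower_central (S i) (comm a y).
Proof.
  intros Hy. simpl. intros T [_ [_ TV]] Hgen.
  rewrite commg_swap. apply TV, Hgen. exists y, a. auto.
Qed.

End GroupFacts.

Definition hom_on {G H : group} (S : G -> Prop) (f : G -> H) : Prop :=
  forall a b, S a -> S b -> f (gmul a b) = gmul (f a) (f b).

Definition image_of {G H : group} (f : G -> H) (S : G -> Prop) : H -> Prop :=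
  fun x => exists g, S g /\ x = f g.

Definition centralizes {G : group} (T A : G -> Prop) : Prop :=
  forall h w, T h -> A w -> gmul h w = gmul w h.

Section HomOn.
Context {G H : group} {S : G -> Prop} {f : G -> H}.
Hypotheses (HS : is_subgroup S) (Hf : hom_on S f).

Lemma morph1_on : f gone = gone.
Proof.
  destruct HS as [S1 _].
  apply mulg_idem_eq1. rewrite <- Hf, gmul1 by exact S1. reflexivity.
Qed.

Lemma morphV_on x : S x -> f (ginv x) = ginv (f x).
Proof.
  destruct HS as [_ [_ SV]]. intro Sx.
  apply invg_unique. rewrite <- Hf, gmulV by auto. exact morph1_on.
Qed.

Lemma morphX_on x n : S x -> f (gpow x n) = gpow (f x) n.
Proof.
  intro Sx. induction n; simpl.
  - exact morph1_on.
  - rewrite Hf, IHn by (auto; apply gpow_in; auto). reflexivity.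
Qed.

Lemma image_subgroup : is_subgroup (image_of f S).
Proof.
  pose proof HS as [S1 [SM SV]].
  split; [|split].
  - exists gone. split; auto. symmetry. exact morph1_on.
  - intros a b [x [Sx ->]] [y [Sy ->]]. exists (gmul x y). split; [auto | symmetry; apply Hf; assumption].
  - intros a [x [Sx ->]]. exists (ginv x). split; auto.
    symmetry. apply morphV_on, Sx.
Qed.

End HomOn.

Section Hom.
Context {G Q : group} {pi : G -> Q}.
Hypothesis Hpi : is_hom pi.

Let Hpi_on : hom_on (fun _ => True) pi := fun a b _ _ => Hpi a b.

Lemma morphV x : pi (ginv x) = ginv (pi x).
Proof. exact (morphV_on (is_subgroup_full G) Hpi_on x I). Qed.

Lemma morphX x n : pi (gpow x n) = gpow (pi x) n.
Proof. exact (morphX_on (is_subgroup_full G) Hpi_on x n I). Qed.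

Lemma preimage_subgroup {D : Q -> Prop} :
  is_subgroup D -> is_subgroup (fun g => D (pi g)).
Proof.
  intros [D1 [DM DV]]. split; [|split].
  - rewrite (morph1_on (is_subgroup_full G) Hpi_on). exact D1.
  - intros a b Da Db. rewrite Hpi. auto.
  - intros a Da. rewrite morphV. auto.
Qed.

Lemma image_divisible {H : group} (D : Q -> Prop) (f : G -> H) :
  (forall q, exists g, pi g = q) -> is_subgroup D -> divisible D ->
  hom_on (fun g => D (pi g)) f -> (forall a b, pi a = pi b -> f a = f b) ->
  divisible (image_of f (fun g => D (pi g))).
Proof.
  intros Hsurj HD Ddiv Hf Hfib x [h [Dh ->]] n Hn.
  destruct (Ddiv _ Dh n Hn) as [e [De He]].
  destruct (Hsurj e) as [k <-].
  exists (f k). split; [exists k; auto |].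
  rewrite <- (morphX_on (preimage_subgroup HD) Hf k n De).
  apply Hfib. rewrite morphX. exact He.
Qed.

End Hom.

Lemma commg_fibre {G Q : group} {pi : G -> Q} (a b y : G) :
  is_quotient_by_center pi -> pi a = pi b -> comm a y = comm b y.
Proof.
  intros [Hhom [_ Hker]] Hab.
  assert (E : a = gmul b (gmul (ginv b) a)) by now rewrite gmulA, mulgV, gmul1.
  rewrite E, commMg_center; [reflexivity |].
  apply Hker. rewrite Hhom, morphV, Hab, gmulV by exact Hhom. reflexivity.
Qed.

Lemma commg_hom_on {G : group} {T : G -> Prop} {i : nat} {y : G} :
  centralizes T (lower_central (S i)) -> lower_central i y ->
  hom_on T (fun h => comm h y).
Proof.
  intros Hcent Hy a b _ Tb. apply commMg, Hcent, lower_central_comm; auto.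
Qed.

Lemma nat_transition (P : nat -> Prop) c : ~ P 0 -> P c -> exists i, ~ P i /\ P (S i).
Proof.
  intro P0. induction c as [|c IH]; intro Pc; [contradiction |].
  destruct (classic (P c)); eauto.
Qed.

Lemma nilpotent_centralizing_layer {G : group} {T : G -> Prop} :
  nilpotent G -> (exists h, T h /\ ~ center G h) ->
  exists i, ~ centralizes T (lower_central i) /\ centralizes T (lower_central (S i)).
Proof.
  intros [c Hc] [h [Th Hh]].
  apply (nat_transition (fun i => centralizes T (lower_central i)) c).
  - intro Hcent. apply Hh. intro y. apply Hcent; [exact Th | exact I].
  - intros a w _ Hw. rewrite (Hc w Hw), mulg1, gmul1. reflexivity.
Qed.

Lemma not_centralizes_comm {G : group} {T A : G -> Prop} :
  ~ centralizes T A -> exists h y, T h /\ A y /\ comm h y <> gone.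
Proof.
  intro Hnot. apply NNPP. intro Hno. apply Hnot. intros h y Th Ay.
  apply commg_eq1, NNPP. intro Hne. apply Hno. eauto.
Qed.

Theorem mainTheorem3 (G : group) (Q : group) (pi : G -> Q) :
  nilpotent G ->
  is_quotient_by_center pi ->
  has_nontrivial_divisible_subgroup Q ->
  has_nontrivial_divisible_subgroup G.
Proof.
  intros Hnil Hq [D [HD [Ddiv [d [Dd Hd1]]]]].
  pose proof Hq as [Hhom [Hsurj Hker]].
  set (T := fun g => D (pi g)).
  assert (Hnc : exists h, T h /\ ~ center G h).
  { destruct (Hsurj d) as [h <-]. exists h. split; [exact Dd |].
    intro C. apply Hd1, Hker, C. }
  destruct (nilpotent_centralizing_layer Hnil Hnc) as [i [Hnot Hcent]].
  destruct (not_centralizes_comm Hnot) as [h0 [y [Th0 [Hy Hne]]]].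
  pose proof (commg_hom_on Hcent Hy) as Hf.
  exists (image_of (fun h => comm h y) T). split; [|split].
  - exact (image_subgroup (preimage_subgroup Hhom HD) Hf).
  - apply (image_divisible Hhom); auto.
    intros a b. apply commg_fibre, Hq.
  - exists (comm h0 y). split; [exists h0 |]; auto.
Qed.
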